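(* Let $p,q,r,s\in\mathrm{baxt}_\infty$ with $\mathrm{ev}(p)=\mathrm{ev}(q)\leqslant\mathrm{ev}(r)$ and $\mathrm{ev}(p)=\mathrm{ev}(q)\leqslant\mathrm{ev}(s)$. Then $spr=sqr$ in $\mathrm{baxt}_\infty$.
   Context: Let $\mathcal{A}=\{1<2<3<\cdots\}$. Right strict binary search tree: labelled rooted binary tree in which each node's label is $\ge$ every label in its left subtree and $<$ every label in its right subtree; inserting $a$: if empty create node $a$, else with root label $x$ insert into right subtree if $a>x$, left subtree otherwise. $\mathrm{P}_{\mathrm{sylv}}(w_1\cdots w_k)$ is obtained from the empty tree by inserting $w_k,\dots,w_1$ in this order. Left strict binary search tree: each node's label is $>$ every label in its left subtree and $\le$ every label in its right subtree; inserting $a$: if empty create node $a$, else with root label $x$ insert into left subtree if $a<x$, right subtree otherwise. $\mathrm{P}^\sharp(w_1\cdots w_k)$ is obtained from the empty tree by inserting $w_1,\dots,w_k$ in this order. Set $\mathrm{P}_{\mathrm{baxt}}(w)=(\mathrm{P}^\sharp(w),\mathrm{P}_{\mathrm{sylv}}(w))$. The Baxter monoid $\mathrm{baxt}_\infty$ is $\mathcal{A}^*/{\equiv}$ with $u\equiv v\iff\mathrm{P}_{\mathrm{baxt}}(u)=\mathrm{P}_{\mathrm{baxt}}(v)$ (a congruence). The evaluation $\mathrm{ev}(u)$ is the tuple $(|u|_a)_{a\in\mathcal{A}}$ of numbers of occurrences of each symbol; it is constant on congruence classes, and $\mathrm{ev}(u)\leqslant\mathrm{ev}(v)$ means $|u|_a\le|v|_a$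 for all $a$. *)

From mathcomp Require Import all_boot.
Set Implicit Arguments. Unset Strict Implicit. Unset Printing Implicit Defensive.

Definition is_word (w : seq nat) : bool := all (fun a => 0 < a) w.

Inductive btree : Type :=
| Leaf : btree
| Node : btree -> nat -> btree -> btree.

(* Insertion into a right strict binary search tree:
   go right if a > x, left otherwise. *)
Fixpoint ins_right (a : nat) (t : btree) : btree :=
  match t with
  | Leaf => Node Leaf a Leaf
  | Node l x r => if x < a then Node l x (ins_right a r) else Node (ins_right a l) x r
  end.

(* Insertion into a left strict binary search tree:
   go left if a < x, right otherwise. *)
Fixpoint ins_left (a : nat) (t : btree) : btree :=
  match t with
  | Leaf => Node Leaf a Leaf
  | Node l x r => if a < x then Node (ins_left a l) x r else Node l x (ins_left a r)
  end.

Definition P_sylv (w : seq nat) : btree := foldr ins_right Leaf w.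

Definition P_sharp (w : seq nat) : btree := foldl (fun t a => ins_left a t) Leaf w.

Definition P_baxt (w : seq nat) : btree * btree := (P_sharp w, P_sylv w).

Definition baxt_equiv (u v : seq nat) : Prop := P_baxt u = P_baxt v.

Definition ev_le (u v : seq nat) : Prop := forall a : nat, count_mem a u <= count_mem a v.
Definition ev_eq (u v : seq nat) : Prop := forall a : nat, count_mem a u = count_mem a v.

From mathcomp Require Import all_boot.
Set Implicit Arguments. Unset Strict Implicit. Unset Printing Implicit Defensive.

(* Call a label [a] found in a binary search tree when the search for [a]
   meets a node labelled [a].  Found labels stay found under further
   insertions, and insertions of two found labels commute.  P_sylv(s p r)
   inserts the letters of [p] into a tree already built from [r], and
   P^#(s p r) into a tree already built from [s]; since every letter of [p]
   occurs in [r] and in [s], it is found there, so both trees only see [p]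
   through commuting insertions and [p] may be replaced by its
   rearrangement [q]. *)

Section CommutingInsertions.

Variables (T : Type) (act : nat -> T -> T) (found : nat -> T -> bool).

Hypothesis act_comm :
  forall a b t, found a t -> found b t -> act a (act b t) = act b (act a t).
Hypothesis found_act : forall a b t, found a t -> found a (act b t).
Hypothesis found_act_same : forall a t, found a (act a t).

Lemma found_foldr a t s : found a t -> found a (foldr act t s).
Proof. by move=> Ha; elim: s => //= b s IHs; apply: found_act. Qed.

Lemma found_foldr_mem a t s : a \in s -> found a (foldr act t s).
Proof.
elim: s => //= b s IHs; rewrite in_cons => /predU1P [->|/IHs]; last exact: found_act.
exact: found_act_same.
Qed.

Lemma foldr_act_move t s1 s2 a : all (found^~ t) (a :: s1 ++ s2) ->
  foldr act t (s1 ++ a :: s2) = act a (foldr act t (s1 ++ s2)).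
Proof.
elim: s1 => //= b s1 IHs1 /and3P [Ha Hb Hs].
by rewrite IHs1 /= ?Ha // act_comm //; apply: found_foldr.
Qed.

Lemma foldr_act_perm t p q :
  all (found^~ t) p -> perm_eq p q -> foldr act t p = foldr act t q.
Proof.
elim: p q => [|a p IHp] q; first by move=> _ /perm_size /esym /size0nil ->.
move=> /= /andP [Ha Hp] pq.
have aq : a \in q by rewrite -(perm_mem pq) mem_head.
move: pq; case/splitPr: aq => q1 q2.
rewrite perm_sym -[a :: q2]cat1s perm_catCA perm_cons perm_sym => pq.
rewrite foldr_act_move; last by rewrite /= Ha -(perm_all _ pq).
by rewrite (IHp (q1 ++ q2)).
Qed.

End CommutingInsertions.

Fixpoint found_right (a : nat) (t : btree) : bool :=
  match t with
  | Leaf => false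
  | Node l x r => (x == a) || (if x < a then found_right a r else found_right a l)
  end.

Fixpoint found_left (a : nat) (t : btree) : bool :=
  match t with
  | Leaf => false
  | Node l x r => (x == a) || (if a < x then found_left a l else found_left a r)
  end.

Lemma found_right_ins a b t : found_right a t -> found_right a (ins_right b t).
Proof.
elim: t => //= l IHl x r IHr; case: (x < b) => /=;
  by case: (x == a) => //=; case: (x < a); auto.
Qed.

Lemma found_right_ins_same a t : found_right a (ins_right a t).
Proof.
elim: t => /= [|l IHl x r IHr]; first by rewrite eqxx.
by case: ifP => /= ->; rewrite ?IHl ?IHr orbT.
Qed.

Lemma found_left_ins a b t : found_left a t -> found_left a (ins_left b t).
Proof.
elim: t => //= l IHl x r IHr; case: (b < x) => /=;
  by case: (x == a) => //=; case: (a < x); auto.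
Qed.

Lemma found_left_ins_same a t : found_left a (ins_left a t).
Proof.
elim: t => /= [|l IHl x r IHr]; first by rewrite eqxx.
by case: ifP => /= ->; rewrite ?IHl ?IHr orbT.
Qed.

(* Along the search path of [a], either the paths of [a] and [b] part at a
   node, after which the insertions act on disjoint subtrees, or they reach
   the node labelled [a], which sends [a] left and [b] right. *)
Lemma ins_right_comm_lt a b t : found_right a t -> a < b ->
  ins_right a (ins_right b t) = ins_right b (ins_right a t).
Proof.
elim: t => //= l IHl x r IHr Ha ab.
have [->|xa] := eqVneq x a; first by rewrite ab ltnn /= ab ltnn.
move: Ha; rewrite (negbTE xa) /=; case: ltnP => [xa' Ha|ax Ha].
  by rewrite (ltn_trans xa' ab) /= (ltn_trans xa' ab) xa' IHr.
have xaF : (x < a) = false by rewrite ltnNge ax.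
by case: (ltnP x b) => xb /=; rewrite xaF ?xb // ltnNge xb /= IHl.
Qed.

Lemma ins_right_comm a b t : found_right a t -> found_right b t ->
  ins_right a (ins_right b t) = ins_right b (ins_right a t).
Proof.
move=> Ha Hb; case: (ltngtP a b) => [ab|ba|-> //]; first exact: ins_right_comm_lt.
exact/esym/ins_right_comm_lt.
Qed.

Lemma ins_left_comm_lt a b t : found_left b t -> a < b ->
  ins_left a (ins_left b t) = ins_left b (ins_left a t).
Proof.
elim: t => //= l IHl x r IHr Hb ab.
have [->|xb] := eqVneq x b; first by rewrite ab ltnn /= ab ltnn.
move: Hb; rewrite (negbTE xb) /=; case: ltnP => [bx Hb|xb' Hb].
  by rewrite (ltn_trans ab bx) /= (ltn_trans ab bx) bx IHl.
have bxF : (b < x) = false by rewrite ltnNge xb'.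
by case: (ltnP a x) => ax /=; rewrite bxF ?ax // ltnNge ax /= IHr.
Qed.

Lemma ins_left_comm a b t : found_left a t -> found_left b t ->
  ins_left a (ins_left b t) = ins_left b (ins_left a t).
Proof.
move=> Ha Hb; case: (ltngtP a b) => [ab|ba|-> //]; first exact: ins_left_comm_lt.
exact/esym/ins_left_comm_lt.
Qed.

Lemma ev_eq_perm u v : ev_eq u v -> perm_eq u v.
Proof. by move=> uv; apply/allP => a _; apply/eqP. Qed.

Lemma ev_le_subset u v : ev_le u v -> {subset u <= v}.
Proof. by move=> uv a; rewrite -!has_pred1 !has_count => /leq_trans; apply. Qed.

Lemma P_sylv_cat u v : P_sylv (u ++ v) = foldr ins_right (P_sylv v) u.
Proof. exact: foldr_cat. Qed.

Lemma P_sharp_cat u v :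
  P_sharp (u ++ v) = foldl (fun t a => ins_left a t) (P_sharp u) v.
Proof. exact: foldl_cat. Qed.

Lemma P_sharpE w : P_sharp w = foldr ins_left Leaf (rev w).
Proof. by rewrite /P_sharp -{1}(revK w) foldl_rev. Qed.

Lemma P_sylv_perm_catl p q r : perm_eq p q -> {subset p <= r} ->
  P_sylv (p ++ r) = P_sylv (q ++ r).
Proof.
move=> pq pr; rewrite !P_sylv_cat.
apply: (foldr_act_perm ins_right_comm found_right_ins _ pq); apply/allP => a ap.
exact: found_foldr_mem found_right_ins found_right_ins_same _ _ _ (pr a ap).
Qed.

Lemma P_sharp_perm_catr s p q : perm_eq p q -> {subset p <= s} ->
  P_sharp (s ++ p) = P_sharp (s ++ q).
Proof.
move=> pq ps; rewrite !P_sharpE !rev_cat !foldr_cat.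
have rev_pq : perm_eq (rev p) (rev q) by rewrite perm_rev perm_sym perm_rev perm_sym.
apply: (foldr_act_perm ins_left_comm found_left_ins _ rev_pq); apply/allP => a.
rewrite mem_rev => /ps sa.
by apply: found_foldr_mem found_left_ins found_left_ins_same _ _ _ _; rewrite mem_rev.
Qed.

(* The letters need not be positive: the argument works over all of [nat]. *)
Theorem lemma4p8 (p q r s : seq nat) :
  is_word p -> is_word q -> is_word r -> is_word s ->
  ev_eq p q -> ev_le q r -> ev_le q s ->
  baxt_equiv (s ++ p ++ r) (s ++ q ++ r).
Proof.
move=> _ _ _ _ pq qr qs.
have sub_p w : ev_le q w -> {subset p <= w}.
  by move=> qw; apply: ev_le_subset => a; rewrite pq.
have perm_pq := ev_eq_perm pq.
rewrite /baxt_equiv /P_baxt; congr pair.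
- by rewrite !catA !(P_sharp_cat (_ ++ _)) (P_sharp_perm_catr perm_pq (sub_p _ qs)).
- by rewrite !(P_sylv_cat s) (P_sylv_perm_catl perm_pq (sub_p _ qr)).
Qed.
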